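(* Every map in $\mathcal{UM}^0_{ABAB}$ contains at least one chequered quadrangle (type 4) or at least one opposite colored cylinder (type 7) among its non-root 2-cells.
   Context: Colors: red corresponds to the letter $A$, blue to the letter $B$. The allowed non-root 2-cells, each with a colored boundary, are the following seven types. (1) Red quadrangle: a disc bounded by a 4-gon with all edges red. (2) Blue quadrangle: a disc bounded by a 4-gon with all edges blue. (3) Adjacent colored quadrangle: a disc bounded by a 4-gon whose edge colors in cyclic order are red, red, blue, blue. (4) Chequered quadrangle: a disc bounded by a 4-gon whose edge colors in cyclic order are red, blue, red, blue. (5) Red cylinder: a cylinder whose two boundary circles are each a 2-gon with red edges. (6) Blue cylinder: a cylinder whose two boundary circles are each a 2-gon with blue edges. (7) Opposite colored cylinder: a cylinder whose one boundary circle is a 2-gon with red edges and whose other boundary circle is a 2-gon with blue edges. The root face is a disc bounded by a 4-gon with edge colors in cyclic order red, blue, red, blue (the word $ABAB$), with one marked edge. A 2-colored unstable map with root word $ABAB$ consists of the root face together with a finite collection of copies of the allowed 2-cells. All boundary edges are partitioned into pairs, each pair consisting of two edges of the same color, and the two edges of each pair are identified orientation-reversingly, so that the result is a closed oriented surface. Maps are considered up to orientation-preserving homeomorphism preserving colors and the root. $\mathcal{UM}^0_{ABAB}$ is the set of such maps for which the resulting closed surface is connected and homeomorphic to the 2-sphere (genus zero). *)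

From mathcomp Require Import all_boot.
Set Warnings "-notation-overridden".
Set Implicit Arguments. Unset Strict Implicit. Unset Printing Implicit Defensive.

(* Combinatorial encoding of a 2-colored unstable map.
   - S : finite type of edge-sides (boundary edges of all 2-cells, root included).
   - next : S -> S, successor of a side along its boundary circle, following
     the boundary orientation induced by the orientation of the cell;
     the boundary circles are the orbits of next.  The corner at the start
     of side s is labelled by s.
   - col s = true  iff the side s is red (letter A); false = blue (letter B).
   - cell : S -> C assigns each side to its 2-cell (C a finite type of cells).
   - alpha : the pairing of sides (fixed-point-free involution, color
     preserving); s and alpha s are identified orientation-reversingly, so
     the start corner of s is identified with the end corner of alpha s,
     i.e. with the start corner of next (alpha s).
   - r : the marked edge of the root face. *)

Section UMap.
Variables (S C : finType) (next alpha : S -> S) (col : S -> bool)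
  (cell : S -> C).

(* s lies on a 4-gon boundary circle which is the whole boundary of cell c:
   c is a disc bounded by a 4-gon. *)
Definition quad_at (c : C) (s : S) : Prop :=
  cell s = c /\ order next s = 4 /\ (forall t, cell t = c -> fconnect next s t).

(* c is a cylinder whose two boundary circles (through s and t) are 2-gons. *)
Definition cyl_at (c : C) (s t : S) : Prop :=
  cell s = c /\ cell t = c /\ ~~ fconnect next s t /\
  order next s = 2 /\ order next t = 2 /\
  (forall u, cell u = c -> fconnect next s u || fconnect next t u).

Definition red_quadrangle (c : C) : Prop :=
  exists s, quad_at c s /\ forall t, cell t = c -> col t.
Definition blue_quadrangle (c : C) : Prop :=
  exists s, quad_at c s /\ forall t, cell t = c -> ~~ col t.
Definition adjacent_colored_quadrangle (c : C) : Prop :=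
  exists s, quad_at c s /\
    [/\ col s, col (next s), ~~ col (iter 2 next s) & ~~ col (iter 3 next s)].
Definition chequered_quadrangle (c : C) : Prop :=
  exists s, quad_at c s /\
    [/\ col s, ~~ col (next s), col (iter 2 next s) & ~~ col (iter 3 next s)].
Definition red_cylinder (c : C) : Prop :=
  exists s t, cyl_at c s t /\ forall u, cell u = c -> col u.
Definition blue_cylinder (c : C) : Prop :=
  exists s t, cyl_at c s t /\ forall u, cell u = c -> ~~ col u.
Definition opposite_colored_cylinder (c : C) : Prop :=
  exists s t, cyl_at c s t /\
    (forall u, fconnect next s u -> col u) /\
    (forall u, fconnect next t u -> ~~ col u).

Definition allowed_cell (c : C) : Prop :=
  red_quadrangle c \/ blue_quadrangle c \/ adjacent_colored_quadrangle c \/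
  chequered_quadrangle c \/ red_cylinder c \/ blue_cylinder c \/
  opposite_colored_cylinder c.

Definition root_face (r : S) : Prop :=
  quad_at (cell r) r /\
  [/\ col r, ~~ col (next r), col (iter 2 next r) & ~~ col (iter 3 next r)].

(* a cell is a disc iff its sides form a single boundary circle *)
Definition is_disc (c : C) : bool :=
  [exists s, (cell s == c) && [forall t, (cell t == c) ==> fconnect next s t]].

(* vertices: classes of corners under the identification s ~ next (alpha s) *)
Definition vrel : rel S := fun s t => (next (alpha s) == t) || (next (alpha t) == s).
Definition num_vertices : nat := #|[set root vrel s | s : S]|.
Definition num_discs : nat := #|[set c : C | is_disc c]|.

Definition adj : rel S := fun s t =>
  [|| alpha s == t, next s == t | cell s == cell t].
Definition glued_connected : Prop := forall s t, connect adj s t.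

(* Euler characteristic of the glued closed
   oriented surface: V - E + #discs (cylinders contribute 0), E = #|S|/2;
   genus 0 (connected) iff chi = 2, i.e. 2(V + D) = #|S| + 4. *)
Definition UM0_ABAB (r : S) : Prop :=
  injective next /\
  (forall s, cell (next s) = cell s) /\
  (forall s, alpha (alpha s) = s) /\
  (forall s, alpha s != s) /\
  (forall s, col (alpha s) = col s) /\
  root_face r /\
  (forall c, c != cell r -> allowed_cell c) /\
  glued_connected /\
  2 * (num_vertices + num_discs) = #|S| + 4.

End UMap.

From Stdlib Require Classical.
From HB Require Import structures.
From mathcomp Require Import all_boot all_algebra zify.
Set Implicit Arguments. Unset Strict Implicit. Unset Printing Implicit Defensive.
Import GRing.Theory.
Local Open Scope ring_scope.

(* Work mod 2 and read the colouring as the 1-cochain [red = 1].  If no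
   non-root cell were a chequered quadrangle, every cell would carry an even
   number of red sides, so the colouring would be a 1-cocycle of the sphere.
   Since H^1(S^2; F_2) = 0 -- obtained here by counting dimensions of cochain
   spaces against Euler's formula -- it is the coboundary of a function [x] on
   vertices.  Sum [x] over the start corners of all blue sides.  Edge by edge
   the two sides of a blue edge start at the two ends of that edge, which carry
   the same value, so the sum is 0.  Cell by cell, a walk around the boundary
   shows that the root face contributes 1 and every other allowed cell
   (including an opposite coloured cylinder) contributes 0. *)

Local Notation F2 := ('F_2)^o.

Lemma F2_cases (a : F2) : a = 0 \/ a = 1.
Proof. by case: a => [[|[|n]] // Hn]; [left|right]; apply/eqP. Qed.

Lemma F2_addrr (a : F2) : a + a = 0.
Proof. by case: (F2_cases a) => ->; apply/eqP. Qed.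

Lemma F2_addr_eq0 (a b : F2) : (a + b == 0) = (a == b).
Proof. by case: (F2_cases a) (F2_cases b) => -> [] ->. Qed.

Definition bit (b : bool) : F2 := b%:R.

Section FinFunSpace.
Variable T : finType.
Implicit Types (x : {ffun T -> F2}) (P : pred T).

Definition delta (s : T) : {ffun T -> F2} := [ffun t => bit (t == s)].

Lemma ffun_addrr x : x + x = 0.
Proof. by apply/ffunP => t; rewrite !ffunE F2_addrr. Qed.

Lemma sum_bit_eq P s : \sum_(t | P t) bit (t == s) = bit (P s).
Proof.
case Ps: (P s); last first.
  by rewrite big1 // => t Pt; case: eqP => // ts; rewrite ts Ps in Pt.
rewrite (bigD1 s) //= eqxx big1 ?addr0 // => t /andP[_ ts].
by rewrite (negbTE ts).
Qed.

Lemma ffun_delta_expand P x :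
  (forall t, ~~ P t -> x t = 0) -> x = \sum_(s | P s) x s *: delta s.
Proof.
move=> x0; apply/ffunP => t; rewrite sum_ffunE.
under eq_bigr do rewrite !ffunE.
case Pt: (P t); last first.
  rewrite x0 ?Pt // big1 // => s Ps; case: eqP => [ts|_]; last exact: scaler0.
  by rewrite ts Ps in Pt.
rewrite (bigD1 t) //= eqxx big1 ?addr0 => [|s /andP[_ st]].
  by rewrite -[RHS]/(x t * 1) mulr1.
by rewrite eq_sym (negbTE st) scaler0.
Qed.

Lemma memv_span_delta P x :
  (forall t, ~~ P t -> x t = 0) -> x \in <<[seq delta s | s <- enum P]>>%VS.
Proof.
move/ffun_delta_expand => ->; apply: memv_suml => s Ps.
by apply/memvZ/memv_span/map_f; rewrite mem_enum.
Qed.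

Lemma dim_ffun : \dim (fullv : {vspace {ffun T -> F2}}) = #|T|.
Proof. by rewrite dimvf /dim /= muln1. Qed.

End FinFunSpace.

Lemma dim_span_enum (T : finType) (U : vectType F2) (P : {pred T}) (f : T -> U) :
  (\dim <<[seq f s | s <- enum P]>> <= #|P|)%N.
Proof. by rewrite (leq_trans (dim_span _)) // size_map -cardE. Qed.

Definition hom_of (U W : vectType F2) (f : U -> W) (f_lin : semilinear f) :
  'Hom(U, W) :=
  linfun (HB.pack f (GRing.isSemilinear.Build _ _ _ _ f f_lin) : {linear U -> W}).

Lemma hom_ofE (U W : vectType F2) (f : U -> W) (f_lin : semilinear f) x :
  hom_of f_lin x = f x.
Proof. by rewrite lfunE. Qed.

Section HalfEdges.
Variables (T : finType) (alpha : T -> T).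
Hypotheses (alphaK : involutive alpha) (alpha_neq : forall s, alpha s != s).

Definition half := [set s | (enum_rank s < enum_rank (alpha s))%N].

Lemma half_alpha s : (alpha s \in half) = (s \notin half).
Proof.
have ne : nat_of_ord (enum_rank (alpha s)) != enum_rank s.
  by rewrite (inj_eq val_inj) (inj_eq enum_rank_inj) alpha_neq.
by rewrite !inE alphaK [in RHS]ltnNge negbK ltn_neqAle ne.
Qed.

Lemma card_half : #|T| = (2 * #|half|)%N.
Proof.
have img : alpha @: half = ~: half.
  apply/setP => t; rewrite inE -half_alpha.
  apply/imsetP/idP => [[u uH ->]|]; first by rewrite alphaK.
  by exists (alpha t); rewrite ?alphaK.
by rewrite -(cardsC half) -img card_imset ?mul2n ?addnn //; apply: can_inj alphaK.
Qed.

Lemma sum_half (V : nmodType) (f : T -> V) :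
  \sum_s f s = \sum_(s in half) (f s + f (alpha s)).
Proof.
rewrite (bigID (mem half)) /= [X in _ + X](reindex_inj (can_inj alphaK)) /=.
rewrite [X in _ + X](eq_bigl (mem half)) => [|s]; last by rewrite half_alpha negbK.
by rewrite -big_split.
Qed.

End HalfEdges.

Section SphereMap.
Variables (S C : finType) (next alpha : S -> S) (col : S -> bool)
  (cell : S -> C) (r : S).
Hypothesis next_inj : injective next.
Hypothesis cell_next : forall s, cell (next s) = cell s.
Hypothesis alphaK : involutive alpha.
Hypothesis alpha_neq : forall s, alpha s != s.
Hypothesis col_alpha : forall s, col (alpha s) = col s.
Hypothesis root_r : root_face next col cell r.
Hypothesis allowed : forall c, c != cell r -> allowed_cell next col cell c.
Hypothesis connected : glued_connected next alpha cell.
Hypothesis euler :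
  2 * (num_vertices next alpha + num_discs next cell) = #|S| + 4.

Local Notation VS := {ffun S -> F2}.
Local Notation VC := {ffun C -> F2}.
Local Notation "s ~ t" := (fconnect next s t) (at level 70).

Let next_sym : connect_sym (frel next) := fconnect_sym next_inj.

Lemma fconnect_const (T : eqType) (f : S -> T) :
  (forall s, f (next s) = f s) -> forall s t, s ~ t -> f t = f s.
Proof.
move=> fnext s t /(fconnect_invariant (k := f)) -> // u.
by rewrite /= fnext eqxx.
Qed.

Lemma cell_fconnect s t : s ~ t -> cell t = cell s.
Proof. exact: fconnect_const. Qed.

Lemma connected_ind (Q : S -> Prop) s0 :
  (forall a b, adj next alpha cell a b -> Q a -> Q b) -> Q s0 -> forall s, Q s.
Proof.
move=> step Q0 s; have /connectP[p pth ->] := connected s0 s.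
by elim: p s0 pth Q0 => [|b p IH] a //= /andP[/step ab /IH]; auto.
Qed.

Lemma cell_shape c :
  (exists s, quad_at next cell c s) \/ (exists s t, cyl_at next cell c s t).
Proof.
have [->|/allowed] := eqVneq c (cell r); first by left; exists r; case: root_r.
case=> [[s [? _]]|[[s [? _]]|[[s [? _]]|[[s [? _]]|]]]]; try by left; exists s.
by case=> [[s [t [? _]]]|[[s [t [? _]]]|[s [t [? _]]]]]; right; exists s, t.
Qed.

Lemma cell_side c : exists s, cell s = c.
Proof. by case: (cell_shape c) => [[s [? _]]|[s [t [? _]]]]; exists s. Qed.

Lemma cyl_at_not_disc c s t : cyl_at next cell c s t -> ~~ is_disc next cell c.
Proof.
case=> cs [ct [nst _]]; apply/negP => /existsP[w /andP[/eqP cw /forallP wc]].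
move: (wc s) (wc t); rewrite cs ct eqxx /= => ws wt.
by rewrite next_sym in ws; rewrite (connect_trans ws wt) in nst.
Qed.

Lemma cyl_at_same_circle c s t u v : cyl_at next cell c s t ->
  cell u = c -> cell v = c -> (u ~ v) = ((s ~ u) == (s ~ v)).
Proof.
case=> _ [_ [_ [_ [_ cover]]]] /cover cu /cover cv.
apply/idP/eqP => [uv|e]; first exact: same_connect_r next_sym _ _ uv s.
have [su|nsu] := boolP (s ~ u).
  have sv : s ~ v by rewrite -e.
  by rewrite next_sym in su; apply: connect_trans su sv.
have tu : t ~ u by move: cu; rewrite (negbTE nsu).
have tv : t ~ v by move: cv; rewrite -e (negbTE nsu).
by rewrite next_sym in tu; apply: connect_trans tu tv.
Qed.

Lemma cyl_at_orbits c s t u v w : cyl_at next cell c s t ->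
  cell u = c -> cell v = c -> cell w = c -> ~~ (u ~ v) -> ~~ (u ~ w) -> v ~ w.
Proof.
move=> cyl cu cv cw.
rewrite !(cyl_at_same_circle cyl cu) // (cyl_at_same_circle cyl cv cw).
by case: (s ~ u) (s ~ v) (s ~ w) => [] [] [].
Qed.

Definition vertex_gap (x : VS) : VS := [ffun s => x s + x (next (alpha s))].
Definition cobound (x : VS) : VS := [ffun s => x (next s) + x s].
Definition edge_gap (x : VS) : VS := [ffun s => x s + x (alpha s)].
Definition face_sum (x : VS) : VC := [ffun c => \sum_(s | cell s == c) x s].

(* On a cylinder [c], the difference of [x] between a side [s0] of [c] and a
   side [t0] of [c] on the other boundary circle; [0] on discs.  This one
   condition per cylinder compensates, in the dimension count, for cylinders
   not contributing to the Euler characteristic. *)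
Definition circle_gap (c : C) (x : VS) : F2 :=
  if is_disc next cell c then 0 else
  if [pick s | cell s == c] is Some s0 then
    if [pick t | (cell t == c) && ~~ (s0 ~ t)] is Some t0 then x s0 + x t0
    else 0
  else 0.
Definition cyl_gap (x : VS) : VC := [ffun c => circle_gap c x].

Lemma vertex_gap_lin : semilinear vertex_gap.
Proof. by split=> [a x|x y]; apply/ffunP=> s; rewrite !ffunE ?scalerDr // addrACA. Qed.
Lemma cobound_lin : semilinear cobound.
Proof. by split=> [a x|x y]; apply/ffunP=> s; rewrite !ffunE ?scalerDr // addrACA. Qed.
Lemma edge_gap_lin : semilinear edge_gap.
Proof. by split=> [a x|x y]; apply/ffunP=> s; rewrite !ffunE ?scalerDr // addrACA. Qed.
Lemma face_sum_lin : semilinear face_sum.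
Proof.
split=> [a x|x y]; apply/ffunP=> c; rewrite !ffunE.
  by rewrite scaler_sumr; apply: eq_bigr => s _; rewrite ffunE.
by rewrite -big_split; apply: eq_bigr => s _; rewrite ffunE.
Qed.
Lemma cyl_gap_lin : semilinear cyl_gap.
Proof.
split=> [a x|x y]; apply/ffunP=> c; rewrite !ffunE /circle_gap;
  case: ifP => _; rewrite ?scaler0 ?addr0 //;
  case: pickP => [s0 _|_]; rewrite ?scaler0 ?addr0 //;
  case: pickP => [t0 _|_]; rewrite ?scaler0 ?addr0 // !ffunE ?scalerDr //.
by rewrite addrACA.
Qed.

Definition cobound_hom := hom_of cobound_lin.
Definition face_sum_hom := hom_of face_sum_lin.
Definition cyl_gap_hom := hom_of cyl_gap_lin.

Definition vertex_fns := lker (hom_of vertex_gap_lin).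
Definition edge_fns := lker (hom_of edge_gap_lin).
Definition cochains0 := (vertex_fns :&: lker cyl_gap_hom)%VS.
Definition cocycles := (edge_fns :&: lker face_sum_hom)%VS.
Definition coboundaries := (cobound_hom @: cochains0)%VS.

Lemma vertex_fnsP (x : VS) :
  reflect (forall s, x (next (alpha s)) = x s) (x \in vertex_fns).
Proof.
rewrite memv_ker hom_ofE; apply: (iffP eqP) => [/ffunP x0 s | xv].
  by apply/esym/eqP; rewrite -F2_addr_eq0; move: (x0 s); rewrite !ffunE => ->.
by apply/ffunP => s; rewrite !ffunE xv F2_addrr.
Qed.

Lemma edge_fnsP (x : VS) : reflect (forall s, x (alpha s) = x s) (x \in edge_fns).
Proof.
rewrite memv_ker hom_ofE; apply: (iffP eqP) => [/ffunP x0 s | xe].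
  by apply/esym/eqP; rewrite -F2_addr_eq0; move: (x0 s); rewrite !ffunE => ->.
by apply/ffunP => s; rewrite !ffunE xe F2_addrr.
Qed.

Lemma cobound_kerP (x : VS) : reflect (forall s, x (next s) = x s) (x \in lker cobound_hom).
Proof.
rewrite memv_ker hom_ofE; apply: (iffP eqP) => [/ffunP x0 s | xn].
  by apply/eqP; rewrite -F2_addr_eq0; move: (x0 s); rewrite !ffunE => ->.
by apply/ffunP => s; rewrite !ffunE xn F2_addrr.
Qed.

Lemma dim_vertex_fns : (num_vertices next alpha <= \dim vertex_fns)%N.
Proof.
have vsym : connect_sym (vrel next alpha).
  by apply: sym_connect_sym => u v; rewrite /vrel orbC.
set R := [set fingraph.root (vrel next alpha) s | s : S].
pose N := [pred t | t \notin R].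
have span : (fullv <= vertex_fns + <<[seq delta t | t <- enum N]>>)%VS.
  apply/subvP => x _.
  pose y : VS := [ffun s => x (fingraph.root (vrel next alpha) s)].
  have yv : y \in vertex_fns.
    apply/vertex_fnsP => s; rewrite !ffunE; congr (x _).
    by apply/esym/(fingraph.rootP vsym)/connect1; rewrite /vrel eqxx.
  rewrite -[x](addrNK y) addrC; apply: memv_add => //.
  apply: memv_span_delta => t; rewrite inE negbK => /imsetP[s _ ->].
  by rewrite !ffunE (fingraph.root_root vsym) subrr.
have card : #|S| = (#|R| + #|N|)%N.
  by rewrite -(cardC R) addnC; congr (_ + _); apply: eq_card => t; rewrite !inE.
have := leq_trans (dimvS span) (dimv_add_leqif _ _).1.
rewrite dim_ffun card => /leq_trans/(_ (leq_add (leqnn _) (dim_span_enum N (@delta S)))).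
by rewrite leq_add2r.
Qed.

Lemma dim_ker_cyl_gap :
  (#|S| <= \dim (lker cyl_gap_hom) + #|[pred c | ~~ is_disc next cell c]|)%N.
Proof.
rewrite -dim_ffun -(limg_ker_dim cyl_gap_hom fullv) capfv leq_add2l.
apply: leq_trans (dim_span_enum _ (@delta C)); apply/dimvS/subvP => y /memv_imgP[x _ ->].
by apply: memv_span_delta => c; rewrite hom_ofE ffunE /circle_gap inE negbK => ->.
Qed.

Lemma cyl_gap_kerP (x : VS) :
  reflect (forall c, circle_gap c x = 0) (x \in lker cyl_gap_hom).
Proof.
rewrite memv_ker hom_ofE; apply: (iffP eqP) => [/ffunP x0 c | x0].
  by move: (x0 c); rewrite !ffunE.
by apply/ffunP => c; rewrite !ffunE x0.
Qed.

Lemma cochains0_cobound_ker_const (x : VS) :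
  x \in cochains0 -> x \in lker cobound_hom -> forall s, x s = x r.
Proof.
move=> /memv_capP[/vertex_fnsP xv /cyl_gap_kerP xc] /cobound_kerP xn.
have xcirc := fconnect_const xn.
have xalpha s : x (alpha s) = x s by rewrite -xv alphaK xn.
have xcell u v : cell u = cell v -> x u = x v.
  move=> cuv; have [[s0 [_ [_ cover]]]|[s [t cyl]]] := cell_shape (cell u).
    by rewrite (xcirc _ _ (cover u erefl)) (xcirc _ _ (cover v (esym cuv))).
  move: (xc (cell u)); rewrite /circle_gap (negbTE (cyl_at_not_disc cyl)).
  case: pickP => [s0 /eqP cs0 gap0|/(_ u)]; last by rewrite eqxx.
  suff on_s0 a : cell a = cell u -> x a = x s0.
    by rewrite (on_s0 u) // (on_s0 v) // -cuv.
  move=> ca; have [s0a|ns0a] := boolP (s0 ~ a); first exact: xcirc.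
  move: gap0; case: pickP => [t0 /andP[/eqP ct0 nt0] /eqP|/(_ a)]; last by rewrite ca eqxx ns0a.
  rewrite F2_addr_eq0 => /eqP ->; apply: xcirc.
  exact: cyl_at_orbits cyl cs0 ct0 ca nt0 ns0a.
move=> s; apply: esym; move: s; apply: connected_ind => // a b.
by case/or3P => [/eqP <-|/eqP <-|/eqP cab] ->; rewrite ?xalpha ?xn // (xcell _ _ cab).
Qed.

Lemma dim_cochains0_cobound_ker : (\dim (cochains0 :&: lker cobound_hom) <= 1)%N.
Proof.
have const : (cochains0 :&: lker cobound_hom <= <[[ffun _ => 1] : VS]>)%VS.
  apply/subvP => x /memv_capP[x0 xc]; apply/vlineP; exists (x r).
  apply/ffunP => s; rewrite !ffunE (cochains0_cobound_ker_const x0 xc).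
  by rewrite -[RHS]/(x r * 1) mulr1.
by apply: leq_trans (dimvS const) _; rewrite dim_vline leq_b1.
Qed.

Definition edge_pair (s : S) : VS := delta s + delta (alpha s).

Lemma edge_pair_edge_fns s : edge_pair s \in edge_fns.
Proof.
apply/edge_fnsP => t; rewrite !ffunE addrC; congr (bit _ + bit _).
  exact: (inj_eq (can_inj alphaK)).
by apply/eqP/eqP => [<-|->]; rewrite alphaK.
Qed.

Lemma dim_edge_fns : (\dim edge_fns <= #|half alpha|)%N.
Proof.
apply: leq_trans (dim_span_enum (half alpha) edge_pair); apply/dimvS/subvP.
move=> x /edge_fnsP xalpha.
have -> : x = \sum_(s in half alpha) x s *: edge_pair s.
  transitivity (\sum_(s | xpredT s) x s *: delta s); first exact: ffun_delta_expand.
  rewrite [LHS](sum_half alphaK alpha_neq (fun s => x s *: delta s)).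
  by apply: eq_bigr => s _; rewrite xalpha -scalerDr.
by apply: memv_suml => s sH; apply/memvZ/memv_span/map_f; rewrite mem_enum.
Qed.

Lemma face_sum_edge_pair s :
  face_sum_hom (edge_pair s) = delta (cell s) + delta (cell (alpha s)).
Proof.
apply/ffunP => c; rewrite hom_ofE !ffunE.
under eq_bigr do rewrite !ffunE.
by rewrite big_split /= !sum_bit_eq /= ![c == _]eq_sym.
Qed.

Lemma dim_face_sum_edge_fns : (#|C| <= \dim (face_sum_hom @: edge_fns) + 1)%N.
Proof.
set W := (face_sum_hom @: edge_fns + <[delta (cell r)]>)%VS.
have imgW s : face_sum_hom (edge_pair s) \in W.
  by rewrite -[X in X \in W]addr0; apply/memv_add/mem0v/memv_img/edge_pair_edge_fns.
have deltaW s : delta (cell s) \in W.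
  move: s; apply: connected_ind => [a b|]; last first.
    by rewrite -[X in X \in W]add0r; apply/memv_add/memv_line/mem0v.
  case/or3P => [/eqP <-|/eqP <-|/eqP <-] //; last by rewrite cell_next.
  move=> aW; have -> : delta (cell (alpha a)) = delta (cell a) + face_sum_hom (edge_pair a).
    by rewrite face_sum_edge_pair addrA ffun_addrr add0r.
  exact: memvD.
have full : (fullv <= W)%VS.
  apply/subvP => y _; rewrite (@ffun_delta_expand _ xpredT y) //.
  apply: memv_suml => c _; apply: memvZ; have [s <-] := cell_side c; exact: deltaW.
rewrite -[#|C|]dim_ffun; apply: leq_trans (dimvS full) _.
apply: leq_trans (dimv_add_leqif _ _).1 _.
by rewrite leq_add2l dim_vline leq_b1.
Qed.

Lemma face_sum_kerP (x : VS) :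
  reflect (forall c, \sum_(s | cell s == c) x s = 0) (x \in lker face_sum_hom).
Proof.
rewrite memv_ker hom_ofE; apply: (iffP eqP) => [/ffunP x0 c | x0].
  by move: (x0 c); rewrite !ffunE.
by apply/ffunP => c; rewrite !ffunE x0.
Qed.

Lemma sum_cell_next (x : VS) c :
  \sum_(s | cell s == c) x (next s) = \sum_(s | cell s == c) x s.
Proof.
by rewrite [RHS](reindex_inj next_inj); apply: eq_bigl => s; rewrite cell_next.
Qed.

Lemma coboundaries_sub_cocycles : (coboundaries <= cocycles)%VS.
Proof.
apply/subvP => y /memv_imgP[x /memv_capP[/vertex_fnsP xv _] ->].
apply/memv_capP; split.
  apply/edge_fnsP => s; rewrite hom_ofE !ffunE xv -(xv (alpha s)) alphaK.
  exact: addrC.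
apply/face_sum_kerP => c; under eq_bigr do rewrite hom_ofE ffunE.
by rewrite big_split /= sum_cell_next F2_addrr.
Qed.

(* The bounds [dim cocycles <= E - #|C| + 1] and
   [dim coboundaries >= V - #(cylinders) - 1], with [#|S| = 2 E], meet exactly
   by Euler's formula [2 (V + D) = #|S| + 4]. *)
Lemma dim_cocycles : (\dim cocycles <= \dim coboundaries)%N.
Proof.
have imZ := limg_ker_dim face_sum_hom edge_fns.
have imB := limg_ker_dim cobound_hom cochains0.
have capP := dimv_sum_cap vertex_fns (lker cyl_gap_hom).
have sumP : (\dim (vertex_fns + lker cyl_gap_hom) <= #|S|)%N.
  by rewrite -dim_ffun dimvS ?subvf.
have discs : (#|[pred c | ~~ is_disc next cell c]| + num_discs next cell = #|C|)%N.
  rewrite /num_discs -(cardC [pred c | ~~ is_disc next cell c]); congr (_ + _).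
  by apply: eq_card => c; rewrite !inE negbK.
have := dim_vertex_fns; have := dim_ker_cyl_gap; have := dim_cochains0_cobound_ker.
have := dim_edge_fns; have := dim_face_sum_edge_fns; have := card_half alphaK alpha_neq.
move: euler imZ imB capP sumP discs; rewrite /cocycles /coboundaries /cochains0; lia.
Qed.

Lemma cocycles_sub_coboundaries : (cocycles <= coboundaries)%VS.
Proof.
have [_ <-] := dimv_leqif_sup coboundaries_sub_cocycles.
by rewrite eqn_leq dim_cocycles (dimvS coboundaries_sub_cocycles).
Qed.

Lemma cell_iter k s : cell (iter k next s) = cell s.
Proof. by elim: k => //= k <-; rewrite cell_next. Qed.

Lemma sum_cell_seq (V : nmodType) (f : S -> V) c (L : seq S) :
  uniq L -> (forall t, (cell t == c) = (t \in L)) ->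
  \sum_(t | cell t == c) f t = \sum_(t <- L) f t.
Proof. by move=> uL HL; rewrite big_uniq //; apply: eq_bigl => t; exact: HL. Qed.

Lemma sum_quad (V : nmodType) (f : S -> V) c s : quad_at next cell c s ->
  \sum_(t | cell t == c) f t =
  f s + f (next s) + f (next (next s)) + f (next (next (next s))).
Proof.
case=> cs [o4 cover]; rewrite (@sum_cell_seq _ _ _ (orbit next s)).
- by rewrite /orbit o4 /= !big_cons big_nil addr0 !addrA.
- exact: orbit_uniq.
move=> t; rewrite -fconnect_orbit; apply/eqP/idP => [/cover //|st].
by rewrite (cell_fconnect st).
Qed.

Lemma sum_cyl (V : nmodType) (f : S -> V) c s t : cyl_at next cell c s t ->
  \sum_(u | cell u == c) f u = f s + f (next s) + (f t + f (next t)).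
Proof.
case=> cs [ct [nst [o2 [o2' cover]]]].
rewrite (@sum_cell_seq _ _ _ (orbit next s ++ orbit next t)).
- by rewrite big_cat /orbit o2 o2' /= !big_cons !big_nil !addr0 !addrA.
- rewrite cat_uniq !orbit_uniq andbT /=; apply/hasPn => u.
  rewrite -!fconnect_orbit => tu; apply/negP => su.
  by rewrite next_sym in tu; rewrite (connect_trans su tu) in nst.
move=> u; rewrite mem_cat -!fconnect_orbit; apply/eqP/idP => [/cover //|].
by case/orP => hu; rewrite (cell_fconnect hu).
Qed.

Definition colour : VS := [ffun s => bit (col s)].

Definition blue_weight (x : VS) (c : C) : F2 :=
  \sum_(s | cell s == c) bit (~~ col s) * x s.

Lemma cobound_colour (x : VS) :
  cobound_hom x = colour -> forall s, x (next s) = bit (col s) + x s.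
Proof.
by move=> /ffunP dx s; move: (dx s); rewrite hom_ofE !ffunE => <-; rewrite -addrA F2_addrr addr0.
Qed.

Lemma quad_sums c s b0 b1 b2 b3 : quad_at next cell c s ->
  col s = b0 -> col (next s) = b1 -> col (next (next s)) = b2 ->
  col (next (next (next s))) = b3 ->
  \sum_(t | cell t == c) bit (col t) = bit b0 + bit b1 + bit b2 + bit b3 /\
  forall x, cobound_hom x = colour ->
  blue_weight x c = bit (~~ b0) * x s + bit (~~ b1) * (bit b0 + x s) +
    bit (~~ b2) * (bit b1 + (bit b0 + x s)) +
    bit (~~ b3) * (bit b2 + (bit b1 + (bit b0 + x s))).
Proof.
move=> q h0 h1 h2 h3; rewrite (sum_quad _ q) h0 h1 h2 h3; split=> // x /cobound_colour xn.
by rewrite /blue_weight (sum_quad _ q) !xn h0 h1 h2 h3.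
Qed.

Lemma cyl_sums c s t b0 b1 b2 b3 : cyl_at next cell c s t ->
  col s = b0 -> col (next s) = b1 -> col t = b2 -> col (next t) = b3 ->
  \sum_(u | cell u == c) bit (col u) = bit b0 + bit b1 + (bit b2 + bit b3) /\
  forall x, cobound_hom x = colour ->
  blue_weight x c = bit (~~ b0) * x s + bit (~~ b1) * (bit b0 + x s) +
    (bit (~~ b2) * x t + bit (~~ b3) * (bit b2 + x t)).
Proof.
move=> cyl h0 h1 h2 h3; rewrite (sum_cyl _ cyl) h0 h1 h2 h3; split=> // x /cobound_colour xn.
by rewrite /blue_weight (sum_cyl _ cyl) !xn h0 h1 h2 h3.
Qed.

Lemma quad_sums_even c s b0 b1 b2 b3 : quad_at next cell c s ->
  col s = b0 -> col (next s) = b1 -> col (next (next s)) = b2 ->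
  col (next (next (next s))) = b3 -> ~~ (b0 (+) b1 (+) b2 (+) b3) ->
  \sum_(t | cell t == c) bit (col t) = 0 /\
  forall x, cobound_hom x = colour ->
  blue_weight x c = bit [&& b0 != b1, b1 != b2 & b2 != b3].
Proof.
move=> q h0 h1 h2 h3; have [-> w] := quad_sums q h0 h1 h2 h3; clear h0 h1 h2 h3.
move: w; case: b0 b1 b2 b3 => [] [] [] [] w //= _.
all: split=> [|x /w ->]; last case: (F2_cases (x s)) => ->.
all: by apply/eqP.
Qed.

Lemma cyl_sums_uniform c s t : cyl_at next cell c s t ->
  col (next s) = col s -> col (next t) = col t ->
  \sum_(u | cell u == c) bit (col u) = 0 /\
  forall x, cobound_hom x = colour -> blue_weight x c = 0.
Proof.
move=> cyl h1 h3; have [-> w] := cyl_sums cyl erefl h1 erefl h3.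
split=> [|x /w ->]; first by rewrite !F2_addrr.
move: (x s) (x t) (col s) (col t) => a b [] [];
  by case: (F2_cases a) (F2_cases b) => -> [] ->; apply/eqP.
Qed.

Lemma cell_sums c : (c != cell r -> ~ chequered_quadrangle next col cell c) ->
  \sum_(t | cell t == c) bit (col t) = 0 /\
  forall x, cobound_hom x = colour -> blue_weight x c = bit (c == cell r).
Proof.
have [->|cr /(_ isT) nocheq] := eqVneq c (cell r).
  case: root_r => q [h0 /negbTE h1 h2 /negbTE h3] _.
  exact: quad_sums_even q h0 h1 h2 h3 _.
case: (allowed cr) =>
  [[s [q mono]]|[[s [q mono]]|[[s [q [h0 h1 /negbTE h2 /negbTE h3]]]|[/nocheq[]|]]]].
- have [cs _] := q; have ci k : cell (iter k next s) = c by rewrite cell_iter.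
  exact: quad_sums_even q (mono _ (ci 0)) (mono _ (ci 1)) (mono _ (ci 2)) (mono _ (ci 3)) _.
- have [cs _] := q; have ci k : cell (iter k next s) = c by rewrite cell_iter.
  exact: quad_sums_even q (negbTE (mono _ (ci 0))) (negbTE (mono _ (ci 1)))
    (negbTE (mono _ (ci 2))) (negbTE (mono _ (ci 3))) _.
- exact: quad_sums_even q h0 h1 h2 h3 _.
case=> [[s [t [cyl mono]]]|[[s [t [cyl mono]]]|[s [t [cyl [hs ht]]]]]];
  apply: (cyl_sums_uniform cyl); have [cs [ct _]] := cyl.
- by rewrite !mono ?cell_next.
- by rewrite !mono ?cell_next.
- by apply/negb_inj; rewrite !mono ?cell_next.
- by apply/negb_inj; rewrite !mono ?cell_next.
- by rewrite !hs ?fconnect1.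
by rewrite (negbTE (ht _ (fconnect1 _ _))) (negbTE (ht _ (connect0 _ _))).
Qed.

Lemma sum_blue_weight (x : VS) :
  x \in vertex_fns -> cobound_hom x = colour -> \sum_c blue_weight x c = 0.
Proof.
move=> /vertex_fnsP xv /cobound_colour xn.
have -> : \sum_c blue_weight x c = \sum_s bit (~~ col s) * x s.
  by rewrite (partition_big cell xpredT).
rewrite (sum_half alphaK alpha_neq); apply: big1 => s _.
rewrite col_alpha -(xv (alpha s)) alphaK xn.
by case: (col s); rewrite /bit /= ?mul0r ?add0r ?mul1r ?add0r ?F2_addrr.
Qed.

Lemma exists_chequered_quadrangle :
  exists2 c, c != cell r & chequered_quadrangle next col cell c.
Proof.
apply: Classical_Prop.NNPP => none.
have nocheq c : c != cell r -> ~ chequered_quadrangle next col cell c.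
  by move=> cr cq; apply: none; exists c.
have : colour \in coboundaries.
  apply: (subvP cocycles_sub_coboundaries); apply/memv_capP; split.
    by apply/edge_fnsP => s; rewrite !ffunE col_alpha.
  apply/face_sum_kerP => c; under eq_bigr do rewrite ffunE.
  exact: (cell_sums (nocheq c)).1.
case/memv_imgP => x /memv_capP[xv _] dx.
have := sum_blue_weight xv (esym dx).
under eq_bigr do rewrite (cell_sums (nocheq _)).2 ?dx //.
by rewrite (sum_bit_eq xpredT).
Qed.

End SphereMap.

Theorem lemma1 (S C : finType) (next alpha : S -> S) (col : S -> bool)
    (cell : S -> C) (r : S) :
  UM0_ABAB next alpha col cell r ->
  exists c : C, c != cell r /\
    (chequered_quadrangle next col cell c \/
     opposite_colored_cylinder next col cell c).
Proof.
case=> next_inj [cell_next [alphaK [alpha_neq [col_alpha [root_r [allowed [conn euler]]]]]]].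
have [c cr cq] := exists_chequered_quadrangle next_inj cell_next alphaK alpha_neq
  col_alpha root_r allowed conn euler.
by exists c; split; [|left].
Qed.
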